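(* Let $n\ge 5$ and let $x,y$ be adjacent vertices of $Q_n$ with $f_n(x)+f_n(y)=\operatorname{str}_{f_n}(Q_n)$. If $x$ and $y$ both begin with the bit $0$, then $$\operatorname{str}_{f_n}(Q_n)\le \operatorname{str}_{f_{n-2}}(Q_{n-2})+3\cdot 2^{n-2}+\binom{n-3}{\lceil (n-3)/2\rceil}+\binom{n-2}{\lceil (n-2)/2\rceil}.$$
   Context: $Q_n$ is the $n$-dimensional hypercube: vertices are the $n$-bit strings, adjacent iff they differ in exactly one position. For a bijection $f:V(G)\to\{1,\dots,|V(G)|\}$, $\operatorname{str}_f(G)=\max\{f(u)+f(v):uv\in E(G)\}$. An $n$-bit string is $x_1\cdots x_n$, $x_i\in\{0,1\}$; its weight is its number of $1$s. Lexicographic order: $x<y$ if for some $k$, $x_j=y_j$ for $j<k$ and $x_k<y_k$. $S_n^i$ is the sequence of $n$-bit strings of weight $i$ in increasing lexicographic order; $R_n^i$ is the same set in decreasing lexicographic order. $S_n$ is the concatenation $(R_n^1,R_n^3,\dots,R_n^{n-1},S_n^n,S_n^{n-2},\dots,S_n^2,S_n^0)$ for even $n$ and $(R_n^1,R_n^3,\dots,R_n^{n-2},R_n^n,S_n^{n-1},\dots,S_n^2,S_n^0)$ for odd $n$; $f_n$ maps the string in position $j$ of $S_n$ to $j$. *)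

(* n-bit strings are represented as seq bool of size n,
   with false = 0, true = 1. *)
From mathcomp Require Import all_boot.
Set Implicit Arguments. Unset Strict Implicit. Unset Printing Implicit Defensive.

Fixpoint allbits (n : nat) : seq (seq bool) :=
  if n is n'.+1 then
    [seq b :: s | b <- [:: false; true], s <- allbits n']
  else [:: [::]].

Definition weight (s : seq bool) : nat := count id s.

Definition Sw (n i : nat) : seq (seq bool) :=
  [seq s <- allbits n | weight s == i].
Definition Rw (n i : nat) : seq (seq bool) := rev (Sw n i).

(* For even n the middle block S_n^n and for odd n the block R_n^n are
   single strings, so this uniform description agrees with both cases. *)
Definition Sseq (n : nat) : seq (seq bool) :=
  flatten [seq Rw n i | i <- iota 0 n.+1 & odd i] ++
  flatten [seq Sw n i | i <- rev (iota 0 n.+1) & ~~ odd i].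

Definition fn (n : nat) (x : seq bool) : nat := (index x (Sseq n)).+1.

Definition hadj (x y : seq bool) : bool :=
  (size x == size y) && (count id [seq p.1 != p.2 | p <- zip x y] == 1).

Definition strQ (n : nat) : nat :=
  \max_(u <- allbits n) \max_(v <- allbits n | hadj u v) (fn n u + fn n v).

From mathcomp Require Import all_boot zify_ssreflect.
Set Implicit Arguments. Unset Strict Implicit. Unset Printing Implicit Defensive.

(* Write x = 0abz and y = 0a'b'z' with z, z' of length n - 3.  Counting, weight
   class by weight class, the strings that precede 0abz in S_n shows that
   f_n(0abz) = f_{n-2}((a xor b)z) + sum_k C(n-3, k) d(k), with a correction d
   depending only on a, b, k and the weight of z.  Since x ~ y, also
   (a xor b)z ~ (a' xor b')z', so the f_{n-2}-values of these two strings add up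
   to at most str_{f_{n-2}}(Q_{n-2}).  Adjacency leaves three cases (a flipped, b
   flipped, or a bit of z flipped); in each, the two corrections sum pointwise to
   at most 6 plus indicators of two consecutive weights, and summing against the
   binomial weights gives 3 2^(n-2) plus two binomial coefficients, each bounded
   by the central one. *)

Lemma pairwise_rev (T : Type) (r : rel T) s :
  pairwise r (rev s) = pairwise (fun a b => r b a) s.
Proof. by elim: s => // a s IH; rewrite rev_cons pairwise_rcons IH /= all_rev. Qed.

Lemma pairwise_flatten_map (I T : eqType) (R : rel I) (r : rel T) (F : I -> seq T) l :
  pairwise R l -> {in l, forall i, pairwise r (F i)} ->
  {in l &, forall i j, R i j -> allrel r (F i) (F j)} ->
  pairwise r (flatten (map F l)).
Proof.
elim: l => // i l IH /= /andP [Ril Rl] rF RF; rewrite pairwise_cat.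
apply/and3P; split; last 1 first.
- by apply: IH => // [j jl | j k jl kl]; [apply: rF | apply: RF];
     rewrite ?inE ?jl ?kl ?orbT.
- apply/allrelP => u v ui /flatten_mapP [j jl vj].
  by have /allrelP := RF i j (mem_head _ _) (@mem_behead _ (i :: l) _ jl) (allP Ril j jl); apply.
- by apply: rF; rewrite mem_head.
Qed.

Lemma index_pairwise (T : eqType) (r : rel T) s x :
  irreflexive r -> (forall a b, r a b -> ~~ r b a) ->
  pairwise r s -> x \in s -> index x s = count (r^~ x) s.
Proof.
move=> irr asym; elim: s => // h s IH /= /andP [rh rs].
rewrite inE eq_sym; case: eqVneq => [<- _ | _ xs] /=; last first.
  by rewrite (IH rs xs) (allP rh x xs).
rewrite irr; apply/esym/eqP; rewrite -leqn0 leqNgt -has_count.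
by apply/hasPn => y ys; apply: asym; apply: (allP rh).
Qed.

Lemma leq_bin_uphalf n k : 'C(n, k) <= 'C(n, uphalf n).
Proof.
have half_le : uphalf n <= n by rewrite uphalf_half; have := odd_double_half n; lia.
have bin_incr : {in [pred i | i <= uphalf n] &, {homo binomial n : i j / i <= j}}.
  apply: homo_leq_in => [//|j i l|i j /= _ ju l|j /= _ ju]; first exact: leq_trans.
    by case/andP => _ /ltnW/leq_trans; apply.
  rewrite -(leq_pmul2l (ltn0Sn j)) mul_bin_left leq_mul //.
  by move: ju; rewrite inE uphalf_half; have := odd_double_half n; lia.
have [ku | uk] := leqP k (uphalf n); first by apply: bin_incr; rewrite ?inE.
have [kn | nk] := leqP k n; last by rewrite bin_small.
rewrite -bin_sub //; apply: bin_incr; rewrite ?inE //;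
  move: uk; rewrite uphalf_half; have := odd_double_half n; lia.
Qed.

Lemma allbitsS n :
  allbits n.+1 = map (cons false) (allbits n) ++ map (cons true) (allbits n).
Proof. by rewrite /= cats0. Qed.

Lemma mem_allbits n s : (s \in allbits n) = (size s == n).
Proof.
elim: n s => [|n IH] [|b s] //; rewrite allbitsS mem_cat.
- by apply/negbTE/norP; split; apply/negP => /mapP [].
- have mem_cons c : (c :: s \in map (cons c) (allbits n)) = (size s == n).
    by rewrite -IH; apply/mapP/idP => [[t ? [->]] | ?] //; exists s.
  have nmem_cons c : (c :: s \in map (cons (~~ c)) (allbits n)) = false.
    by apply/mapP => -[t _ []]; case: c.
  by case: b; rewrite ?mem_cons ?(nmem_cons true) ?(nmem_cons false) ?orbF.
Qed.

Lemma uniq_allbits n : uniq (allbits n).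
Proof.
elim: n => // n IH; rewrite allbitsS cat_uniq !map_inj_uniq //=; try by move=> ? ? [].
by rewrite IH andbT; apply/hasPn => _ /mapP [t _ ->]; apply/mapP => -[].
Qed.

Fixpoint ltlex (s t : seq bool) : bool :=
  if (s, t) is (b :: s', c :: t') then (~~ b && c) || (b == c) && ltlex s' t'
  else false.

Lemma ltlex_irr : irreflexive ltlex.
Proof. by elim=> //= b s ->; rewrite andbF; case: b. Qed.

Lemma ltlex_asym s t : ltlex s t -> ~~ ltlex t s.
Proof. by elim: s t => [|b s IH] [|c t] //=; case: b; case: c => //=; apply: IH. Qed.

Lemma ltlex_total s t : size s = size t -> ltlex s t + ltlex t s + (s == t) = 1.
Proof.
by elim: s t => [|b s IH] [|c t] //= [/IH]; case: b; case: c; rewrite //= eqseq_cons.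
Qed.

Lemma pairwise_ltlex_allbits n : pairwise ltlex (allbits n).
Proof.
elim: n => // n IH; rewrite allbitsS pairwise_cat !pairwise_map.
apply/and3P; split; last 1 first; try by apply: sub_pairwise IH => s t /= ->.
by apply/allrelP => _ _ /mapP [s _ ->] /mapP [t _ ->].
Qed.

Lemma weight_cons (b : bool) s : weight (b :: s) = b + weight s.
Proof. by []. Qed.

(* [precS] is the order in which S_n lists the n-bit strings: by weight blocks
   ([block_lt]: odd weights increasing, then even weights decreasing), and
   inside a block decreasingly (odd weight) or increasingly (even weight) in
   lexicographic order. *)
Definition block_lt (k w : nat) : bool :=
  if odd w then odd k && (k < w) else odd k || (w < k).

Definition precS (t x : seq bool) : bool :=
  block_lt (weight t) (weight x) ||
  (weight t == weight x) && (if odd (weight x) then ltlex x t else ltlex t x).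

Definition rankS (n : nat) (x : seq bool) : nat := (count (precS^~ x) (allbits n)).+1.

Lemma block_lt_irr : irreflexive block_lt.
Proof. by move=> k; rewrite /block_lt; case: (odd k); rewrite ltnn ?andbF. Qed.

Lemma block_lt_asym k w : block_lt k w -> ~~ block_lt w k.
Proof. by rewrite /block_lt; case: (odd k); case: (odd w) => /=; lia. Qed.

Lemma precS_irr : irreflexive precS.
Proof. by move=> t; rewrite /precS block_lt_irr eqxx ltlex_irr; case: ifP. Qed.

Lemma precS_asym t x : precS t x -> ~~ precS x t.
Proof.
rewrite /precS; case/orP => [lt_tx | /andP [/eqP wtx lt_tx]].
  rewrite negb_or (block_lt_asym lt_tx) /=; apply/negP => /andP [/eqP wxt _].
  by move: lt_tx; rewrite wxt block_lt_irr.
rewrite wtx block_lt_irr eqxx /=; move: lt_tx; rewrite -wtx.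
by case: ifP => _ /ltlex_asym.
Qed.

Lemma mem_Sw n i t : (t \in Sw n i) = (size t == n) && (weight t == i).
Proof. by rewrite mem_filter mem_allbits andbC. Qed.

Lemma pairwise_precS_Sw n i : ~~ odd i -> pairwise precS (Sw n i).
Proof.
move=> ev_i; apply: (@sub_in_pairwise _ (fun t => weight t == i) ltlex).
- by move=> s t /eqP ws /eqP wt lt_st; rewrite /precS ws wt eqxx (negbTE ev_i) lt_st orbT.
- by apply/allP => t; rewrite mem_Sw => /andP [].
- exact/pairwise_filter/pairwise_ltlex_allbits.
Qed.

Lemma pairwise_precS_Rw n i : odd i -> pairwise precS (Rw n i).
Proof.
move=> odd_i; rewrite pairwise_rev.
apply: (@sub_in_pairwise _ (fun t => weight t == i) ltlex).
- by move=> s t /eqP ws /eqP wt lt_st; rewrite /precS ws wt eqxx odd_i lt_st orbT.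
- by apply/allP => t; rewrite mem_Sw => /andP [].
- exact/pairwise_filter/pairwise_ltlex_allbits.
Qed.

Lemma pairwise_precS_Sseq n : pairwise precS (Sseq n).
Proof.
have iota_lt : pairwise ltn (iota 0 n.+1).
  by rewrite -(sorted_pairwise ltn_trans) iota_ltn_sorted.
rewrite pairwise_cat; apply/and3P; split.
- apply/allrelP => s t /flatten_mapP [i ii si] /flatten_mapP [j jj tj].
  move: si tj ii jj; rewrite /precS mem_rev !mem_Sw !mem_filter.
  move=> /andP [_ /eqP->] /andP [_ /eqP->] /andP [odd_i _] /andP [ev_j _].
  by rewrite /block_lt (negbTE ev_j) odd_i.
- apply: (pairwise_flatten_map (R := ltn)); first exact: pairwise_filter.
    by move=> i; rewrite mem_filter => /andP [/pairwise_precS_Rw].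
  move=> i j; rewrite !mem_filter => /andP [odd_i _] /andP [odd_j _] lt_ij.
  apply/allrelP => s t; rewrite /precS !mem_rev !mem_Sw.
  by move=> /andP [_ /eqP->] /andP [_ /eqP->]; rewrite /block_lt odd_j odd_i (lt_ij : i < j).
- apply: (pairwise_flatten_map (R := fun i j => j < i)).
    by apply: pairwise_filter; rewrite pairwise_rev.
    by move=> i; rewrite mem_filter => /andP [/pairwise_precS_Sw].
  move=> i j; rewrite !mem_filter => /andP [ev_i _] /andP [ev_j _] lt_ji.
  apply/allrelP => s t; rewrite /precS !mem_Sw.
  by move=> /andP [_ /eqP->] /andP [_ /eqP->]; rewrite /block_lt (negbTE ev_j) lt_ji orbT.
Qed.

Lemma mem_Sseq n t : (t \in Sseq n) = (t \in allbits n).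
Proof.
rewrite mem_allbits mem_cat; apply/idP/idP.
  by case/orP => /flatten_mapP [i _]; rewrite ?mem_rev mem_Sw => /andP [].
move=> /eqP st; have wt : weight t < n.+1 by rewrite -st ltnS count_size.
have t_Sw : t \in Sw n (weight t) by rewrite mem_Sw st !eqxx.
case odd_t: (odd (weight t)); apply/orP; [left | right];
  apply/flatten_mapP; exists (weight t); rewrite ?mem_rev //.
- by rewrite mem_filter mem_iota odd_t.
- by rewrite mem_filter mem_rev mem_iota odd_t.
Qed.

Lemma fn_rankS n x : x \in allbits n -> fn n x = rankS n x.
Proof.
move=> xn; rewrite /fn /rankS (index_pairwise precS_irr precS_asym (pairwise_precS_Sseq n));
  last by rewrite mem_Sseq.
congr S; apply/permP/uniq_perm; last exact: mem_Sseq.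
  exact: pairwise_uniq precS_irr (pairwise_precS_Sseq n).
exact: uniq_allbits.
Qed.

Definition wsum (m : nat) (g : nat -> nat) : nat := \sum_(s <- allbits m) g (weight s).

Definition pascal (g : nat -> nat) (k : nat) : nat := g k + g k.+1.

Lemma wsum_pascal m g : wsum m.+1 g = wsum m (pascal g).
Proof. by rewrite /wsum allbitsS big_cat !big_map big_split. Qed.

Lemma wsumD m g h : wsum m (fun k => g k + h k) = wsum m g + wsum m h.
Proof. exact: big_split. Qed.

Lemma wsum_le m g h : (forall k, g k <= h k) -> wsum m g <= wsum m h.
Proof. by move=> le_gh; apply: leq_sum. Qed.

Lemma wsum_const m c : wsum m (fun _ => c) = c * 2 ^ m.
Proof.
elim: m => [|m IH]; first by rewrite /wsum big_seq1 muln1.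
by rewrite wsum_pascal /pascal wsumD IH expnS; lia.
Qed.

Lemma wsum_eq_bin m j : wsum m (fun k => k == j) = 'C(m, j).
Proof.
elim: m j => [|m IH] [|j]; rewrite ?wsum_pascal /pascal ?wsumD ?IH ?binS //.
1,2: by rewrite /wsum big_seq1.
by rewrite /wsum big1 // !bin0.
Qed.

Lemma count_sum (T : Type) (p : pred T) s : count p s = \sum_(t <- s) p t.
Proof. by elim: s => [|t s IH]; rewrite ?big_nil ?big_cons //= IH. Qed.

Lemma count_weight_wsum m (p : pred nat) :
  count (fun t => p (weight t)) (allbits m) = wsum m p.
Proof. exact: count_sum. Qed.

(* For [t] of weight [k] and [s] of weight [w]:
   [prec10 w k] = [1t precedes 0s] and
   [prec1 w k] = [0t precedes 1s] + [1t precedes 1s] + [t precedes s] + [t = s]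
   (for equal weights, exactly one of the last three holds). *)
Definition prec10 (w k : nat) : bool := block_lt k.+1 w || (k.+1 == w) && odd w.

Definition prec1 (w k : nat) : nat :=
  (block_lt k w.+1 || (k == w.+1) && odd w)
  + (k == w) + block_lt k.+1 w.+1 + block_lt k w.

Lemma rankS_cons0 m s : rankS m.+1 (false :: s) = rankS m s + wsum m (prec10 (weight s)).
Proof.
rewrite /rankS allbitsS count_cat !count_map addSn -count_weight_wsum; congr (S (_ + _)).
by apply: eq_count => t; rewrite /= /precS /prec10 /=; case: (odd _).
Qed.

Lemma precS_cons1_weight t s : size t = size s ->
  precS (true :: t) (true :: s) + precS t s + (t == s) =
  (weight t == weight s) + block_lt (weight t).+1 (weight s).+1 + block_lt (weight t) (weight s).
Proof.
move=> st; rewrite /precS /= eqSS; have [wts | wts] := eqVneq (weight t) (weight s).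
  by rewrite wts !block_lt_irr /= -(ltlex_total st); case: (odd _) => /=; lia.
have -> : (t == s) = false by apply: contraNF wts => /eqP->.
by rewrite !orbF addn0.
Qed.

Lemma rankS_cons1 m s : s \in allbits m ->
  rankS m.+1 (true :: s) + rankS m s = 1 + wsum m (prec1 (weight s)).
Proof.
move=> sm; rewrite /rankS allbitsS count_cat !count_map.
have count_s : count (pred1 s) (allbits m) = 1.
  by rewrite count_uniq_mem ?uniq_allbits ?sm.
have cons0 : count (preim (cons false) (precS^~ (true :: s))) (allbits m) =
    wsum m (fun k => block_lt k (weight s).+1 || (k == (weight s).+1) && odd (weight s)).
  rewrite -count_weight_wsum; apply: eq_count => t.
  by rewrite /= /precS /=; case: (odd _).
have cons1 : count (preim (cons true) (precS^~ (true :: s))) (allbits m) +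
    count (precS^~ s) (allbits m) + count (pred1 s) (allbits m) =
    wsum m (fun k => (k == weight s) + block_lt k.+1 (weight s).+1 + block_lt k (weight s)).
  rewrite !count_sum -!big_split /wsum !big_seq; apply: eq_bigr => t tm /=.
  by apply: precS_cons1_weight; move: tm sm; rewrite !mem_allbits => /eqP-> /eqP->.
rewrite /prec1 !wsumD in cons0 cons1 *; lia.
Qed.

Lemma rankS_children m s : s \in allbits m ->
  rankS m.+1 (false :: s) + rankS m.+1 (true :: s) =
  1 + wsum m (fun k => prec10 (weight s) k + prec1 (weight s) k).
Proof. by move=> /rankS_cons1; rewrite rankS_cons0 wsumD; lia. Qed.

Definition excess (a : bool) (w i : nat) : nat :=
  if a then pascal (prec1 w) i + pascal (pascal (prec10 w.+1)) i
  else pascal (prec10 w) i + pascal (pascal (prec10 w)) i.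

Definition deficit (a : bool) (k i : nat) : nat := a * (prec10 k i + prec1 k i).

Lemma wsum_excess m (a : bool) w : wsum m (excess a w) =
  if a then wsum m.+1 (prec1 w) + wsum m.+2 (prec10 w.+1)
  else wsum m.+1 (prec10 w) + wsum m.+2 (prec10 w).
Proof. by rewrite !wsum_pascal; case: a; rewrite wsumD. Qed.

Lemma wsum_deficit m (a : bool) k :
  wsum m (deficit a k) = a * wsum m (fun i => prec10 k i + prec1 k i).
Proof.
rewrite /wsum; case: a; rewrite ?mul0n ?mul1n; last exact: big1.
by apply: eq_bigr => s _; rewrite /deficit mul1n.
Qed.

Lemma rankS_reduce m (a b : bool) z : size z = m ->
  rankS m.+3 [:: false, a, b & z] + wsum m (deficit a (weight z)) =
  wsum m (excess a (b + weight z)) + rankS m.+1 ((a (+) b) :: z).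
Proof.
move=> zm; have bz : b :: z \in allbits m.+1 by rewrite mem_allbits /= zm.
have z_bits : z \in allbits m by rewrite mem_allbits zm.
rewrite wsum_excess wsum_deficit rankS_cons0 !weight_cons.
case: a; rewrite ?add0n ?add1n ?mul0n ?mul1n ?addFb ?addTb;
  last by rewrite rankS_cons0 weight_cons; lia.
have := rankS_cons1 bz; have := rankS_children z_bits; rewrite weight_cons.
by case: b {bz} => /=; lia.
Qed.

Definition peak (e j i : nat) : nat := 6 + (i.+1 == e) + (i == e) + (i == j).

(* Every term is decided by a, b, the parities of k and i, and linear
   comparisons between k and i. *)
Ltac solve_by_parity a b k i :=
  have := odd_double_half k; have := odd_double_half i;
  move: (k./2) (i./2) => q p;
  case: a; case: b;
  rewrite /excess /deficit /peak /pascal /prec1 /prec10 /block_lt /=;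
  rewrite ?addSn ?addnS ?add0n ?add1n ?oddS ?negbK /=;
  case: (odd k); case: (odd i) => /=; rewrite ?addn0 ?addn1 ?subn0 ?subn1 /=;
  rewrite ?andbF ?andbT ?orbF ?orbT; lia.

Lemma excess_flip_first (a b : bool) k i :
  excess a (b + k) i + excess (~~ a) (b + k) i <=
  deficit a k i + deficit (~~ a) k i + peak (b + k) (b + k) i.
Proof. solve_by_parity a b k i. Qed.

Lemma excess_flip_second (a b : bool) k i :
  excess a (b + k) i + excess a (~~ b + k) i <=
  deficit a k i + deficit a k i + peak (k + odd k) (k + odd k - a) i.
Proof. solve_by_parity a b k i. Qed.

Lemma excess_flip_tail (a b : bool) k i :
  excess a (b + k) i + excess a (b + k.+1) i <=
  deficit a k i + deficit a k.+1 i +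
  peak (b + k + odd (b + k)) (b + k + odd (b + k) - a) i.
Proof. solve_by_parity a b k i. Qed.

Lemma wsum_pair_le m (f g d d' : nat -> nat) (e j : nat) :
  (forall i, f i + g i <= d i + d' i + peak e j i) ->
  wsum m f + wsum m g <=
  wsum m d + wsum m d' + 3 * 2 ^ m.+1 + 'C(m, uphalf m) + 'C(m.+1, uphalf m.+1).
Proof.
move=> fg; have := wsum_le m fg; rewrite !wsumD wsum_const !wsum_eq_bin.
have := wsum_eq_bin m.+1 e; rewrite wsum_pascal /pascal wsumD wsum_eq_bin.
by have := leq_bin_uphalf m.+1 e; have := leq_bin_uphalf m j; rewrite expnS; lia.
Qed.

Lemma eq_bits_count (s t : seq bool) :
  (size s == size t) && (count id [seq p.1 != p.2 | p <- zip s t] == 0) = (s == t).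
Proof.
elim: s t => [|c s IH] [|d t] //=; rewrite eqSS eqseq_cons -IH.
by case: c; case: d; rewrite //= andbF.
Qed.

Lemma hadj_cons (c d : bool) s t :
  hadj (c :: s) (d :: t) = if c == d then hadj s t else s == t.
Proof.
by rewrite /hadj /= eqSS; case: c; case: d; rewrite //= ?add0n ?add1n ?eqSS ?eq_bits_count.
Qed.

Lemma hadj_weight s t : hadj s t ->
  (weight t == (weight s).+1) || (weight s == (weight t).+1).
Proof.
elim: s t => [|c s IH] [|d t] //; rewrite hadj_cons !weight_cons.
by case: eqVneq => [-> /IH | + /eqP ->]; case: c; case: d => //=; rewrite !eqSS ?eqxx ?orbT.
Qed.

Lemma hadj_reduce (a b a' b' : bool) z z' :
  hadj [:: a, b & z] [:: a', b' & z'] -> hadj ((a (+) b) :: z) ((a' (+) b') :: z').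
Proof. by case: a a' b b' => [] [] [] []; rewrite !hadj_cons //= eqseq_cons. Qed.

Lemma rankS_adjacent_le m u v : u \in allbits m -> v \in allbits m -> hadj u v ->
  rankS m u + rankS m v <= strQ m.
Proof.
move=> um vm uv; rewrite -(fn_rankS um) -(fn_rankS vm).
rewrite /strQ; apply: leq_trans (leq_bigmax_seq u um isT).
exact: leq_bigmax_seq vm uv.
Qed.

Lemma excess_adjacent_le m (a b a' b' : bool) z z' :
  hadj [:: a, b & z] [:: a', b' & z'] ->
  wsum m (excess a (b + weight z)) + wsum m (excess a' (b' + weight z')) <=
  wsum m (deficit a (weight z)) + wsum m (deficit a' (weight z')) +
  3 * 2 ^ m.+1 + 'C(m, uphalf m) + 'C(m.+1, uphalf m.+1).
Proof.
rewrite hadj_cons; have [<- | na] := eqVneq a a'; last first.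
  rewrite eqseq_cons => /andP [/eqP <- /eqP <-].
  have -> : a' = ~~ a by case: a a' na => [] [].
  by apply: wsum_pair_le => i; apply: excess_flip_first.
rewrite hadj_cons; have [<- | nb] := eqVneq b b'; last first.
  move=> /eqP <-; have -> : b' = ~~ b by case: b b' nb => [] [].
  by apply: wsum_pair_le => i; apply: excess_flip_second.
case/hadj_weight/orP => /eqP ->.
  by apply: wsum_pair_le => i; apply: excess_flip_tail.
rewrite [wsum m (excess _ _) + _]addnC [wsum m (deficit _ _) + _]addnC.
by apply: wsum_pair_le => i; apply: excess_flip_tail.
Qed.

Theorem theorem2p4 (n : nat) (x y : seq bool) :
  5 <= n ->
  x \in allbits n -> y \in allbits n -> hadj x y ->
  fn n x + fn n y = strQ n ->
  head true x = false -> head true y = false ->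
  strQ n <= strQ (n - 2) + 3 * 2 ^ (n - 2)
            + 'C(n - 3, uphalf (n - 3)) + 'C(n - 2, uphalf (n - 2)).
Proof.
move=> n5 xn yn adj <- x0 y0; rewrite (fn_rankS xn) (fn_rankS yn).
have [m def_n] : exists m, n = m.+3 by exists (n - 3); lia.
rewrite def_n !subSS !subn0 in xn yn *.
move: x y xn yn adj x0 y0 => [|c [|a [|b z]]] [|c' [|a' [|b' z']]];
  rewrite !mem_allbits // => /eqP [zm] /eqP [z'm] + x0 y0.
have -> : c = false := x0; have -> : c' = false := y0.
rewrite hadj_cons eqxx => adj.
have rx : (a (+) b) :: z \in allbits m.+1 by rewrite mem_allbits /= zm.
have ry : (a' (+) b') :: z' \in allbits m.+1 by rewrite mem_allbits /= z'm.
have := rankS_adjacent_le rx ry (hadj_reduce adj).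
have := excess_adjacent_le m adj.
by have := rankS_reduce a b zm; have := rankS_reduce a' b' z'm; lia.
Qed.
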